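(* Let $0<c_1\le \frac{0.04}{d_{\max}}$ and suppose $t\le c_1 n$. Then for all sufficiently large $n$ and all $0\le k\le c_1 n$, \[ \frac{L}{n-d_{\max}}\cdot \exp\!\left(1-\frac{\sum_{i=1}^x d_i (a_i-t_i)}{n}\right)\le \frac{9}{10},\qquad\text{where } L=\sum_{i=1}^x (a_i-t_i)\, d_i\, e^{d_i k/n}. \]
   Context: Setting: $n$ vertices, a target set $B$ with $|B|=t$, each vertex $v$ has out-degree $d_v$ with $2\le d_{\min}\le d_v\le d_{\max}$ (constants). $d_1,\dots,d_x$ are the distinct out-degrees, $a_i$ is the number of vertices of out-degree $d_i$ (so $\sum_i a_i=n$), and $t_i$ the number of vertices of $B$ of out-degree $d_i$ (so $\sum_i t_i=t$). *)

From mathcomp Require Import all_boot all_order all_algebra.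
From mathcomp Require Import reals sequences exp.
Set Implicit Arguments. Unset Strict Implicit. Unset Printing Implicit Defensive.

(* Vertices are 'I_n; deg v is the out-degree of v; B is the target set. *)

(* The distinct out-degrees d_1, ..., d_x (as a duplicate-free list). *)
Definition degs (n : nat) (deg : 'I_n -> nat) : seq nat :=
  undup [seq deg v | v <- enum 'I_n].

Definition acount (n : nat) (deg : 'I_n -> nat) (d : nat) : nat :=
  #|[set v : 'I_n | deg v == d]|.

Definition tcount (n : nat) (deg : 'I_n -> nat) (B : {set 'I_n}) (d : nat) : nat :=
  #|[set v in B | deg v == d]|.

From mathcomp Require Import all_boot all_order all_algebra.
From mathcomp Require Import reals sequences exp.
From mathcomp Require Import ring lra.
Set Implicit Arguments. Unset Strict Implicit. Unset Printing Implicit Defensive.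
Import Order.TTheory GRing.Theory Num.Theory.
Local Open Scope ring_scope.

(* Both sums over the distinct degrees are sums over the vertices outside B,
   and there every degree lies in [2, dmax].  Writing S for the sum of the
   degrees outside B, we get S >= 2 (n - |B|) >= 1.96 n and
   L <= e^(dmax k / n) S <= e^0.04 S.  Hence, with x = S / n >= 1.96, the
   quantity is at most n / (n - dmax) * x e^(1.04 - x); the function x e^(-x)
   decreases for x >= 1, so x e^(1.04 - x) <= 0.891, and n >= 100 dmax makes
   n / (n - dmax) <= 100 / 99, giving 0.891 * 100 / 99 = 0.9. *)

Lemma count_setC_deg n (deg : 'I_n -> nat) (B : {set 'I_n}) d :
  (acount deg d - tcount deg B d)%N = #|[set v in ~: B | deg v == d]|.
Proof.
rewrite /acount /tcount; set A := [set v | deg v == d].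
have -> : [set v in B | deg v == d] = A :&: B.
  by apply/setP => v; rewrite !inE andbC.
have -> : [set v in ~: B | deg v == d] = A :\: B.
  by apply/setP => v; rewrite !inE andbC.
by rewrite -(cardsID B A) addKn.
Qed.

Lemma sum_degs_setC (R : pzSemiRingType) n (deg : 'I_n -> nat)
    (B : {set 'I_n}) (G : nat -> R) :
  \sum_(d <- degs deg) (acount deg d - tcount deg B d)%:R * G d
  = \sum_(v in ~: B) G (deg v).
Proof.
have count_sum d : (acount deg d - tcount deg B d)%:R * G d
                   = \sum_(v in ~: B) (deg v == d)%:R * G d.
  rewrite count_setC_deg mulr_natl -sumr_const.
  rewrite [RHS](eq_bigr (fun v => if deg v == d then G d else 0)).
    by rewrite -big_mkcondr; apply: eq_bigl => v; rewrite !inE.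
  by move=> v _; case: (deg v == d); rewrite ?mul1r ?mul0r.
under eq_bigr do rewrite count_sum.
rewrite exchange_big /=; apply: eq_bigr => v _.
have deg_v : deg v \in degs deg.
  by rewrite mem_undup; apply: map_f; rewrite mem_enum.
rewrite (bigD1_seq (deg v)) ?undup_uniq //= eqxx mul1r big1 ?addr0 //.
by move=> d; rewrite eq_sym => /negbTE ->; rewrite mul0r.
Qed.

Lemma mul_expR_sub_le (R : realType) (x : R) :
  196/100 <= x -> x * expR (104/100 - x) <= 891/1000.
Proof.
move=> x_ge.
have e23 : 123/100 <= expR (23/100 : R) by have := expR_ge1Dx (23/100 : R); lra.
have e92 : 2288/1000 <= expR (92/100 : R).
  have -> : expR (92/100 : R) = expR (23/100) ^+ 2 * expR (23/100) ^+ 2.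
    by rewrite -exprD -expRM_natl; congr expR; rewrite -[4%:R]/(4 : R); lra.
  have : 15129/10000 <= expR (23/100 : R) ^+ 2 by rewrite expr2; nra.
  nra.
(* e^(x - 1.04) = e^0.92 e^(x - 1.96) >= 2.288 (x - 0.96) >= x / 0.891 *)
have shift : expR (x - 104/100) = expR (92/100) * expR (x - 196/100).
  by rewrite -expRD; congr expR; lra.
have tangent : 1 + (x - 196/100) <= expR (x - 196/100) by apply: expR_ge1Dx.
have x_le : x <= 891/1000 * expR (x - 104/100).
  by rewrite shift; have := expR_gt0 (x - 196/100); nra.
have inv : expR (104/100 - x) * expR (x - 104/100) = 1.
  by rewrite -expRD -expR0; congr expR; lra.
by have := expR_gt0 (104/100 - x); nra.
Qed.

Lemma div_mul_expR_le (R : realType) (n dm L S a : R) :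
  0 < dm -> 100 * dm <= n -> L <= expR a * S -> a <= 4/100 ->
  196/100 * n <= S -> L / (n - dm) * expR (1 - S / n) <= 9/10.
Proof.
move=> dm_gt0 n_ge L_le a_le S_ge.
have n_gt0 : 0 < n by lra.
have nd_gt0 : 0 < n - dm by lra.
have S_eq : S = (S / n) * n by rewrite mulfVK // gt_eqF.
set x := S / n in S_eq *.
have x_ge : 196/100 <= x by rewrite /x ler_pdivlMr //; lra.
rewrite mulrAC ler_pdivrMr //.
have bound_x := mul_expR_sub_le x_ge.
have L_exp : L * expR (1 - x) <= S * expR (1 + a - x).
  have -> : S * expR (1 + a - x) = expR a * S * expR (1 - x).
    by rewrite mulrAC -expRD mulrC; congr (expR _ * _); lra.
  by rewrite ler_wpM2r // ltW // expR_gt0.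
have S_exp : S * expR (1 + a - x) <= n * (x * expR (104/100 - x)).
  by rewrite mulrA [n * x]mulrC -S_eq ler_wpM2l ?ler_expR; lra.
have : n * (x * expR (104/100 - x)) <= n * (891/1000) by rewrite ler_wpM2l // ltW.
lra.
Qed.

Lemma sum_deg_setC_ge (R : realFieldType) n (deg : 'I_n -> nat)
    (B : {set 'I_n}) :
  (forall v, (2 <= deg v)%N) -> #|B|%:R <= n%:R / 50 :> R ->
  196/100 * n%:R <= \sum_(v in ~: B) (deg v)%:R :> R.
Proof.
move=> deg_ge B_small.
have card_setC : #|~: B|%:R = n%:R - #|B|%:R :> R.
  have := cardsC B; rewrite card_ord => /(congr1 (GRing.natmul (1 : R))) <-.
  by rewrite natrD addrAC subrr add0r.
have : \sum_(v in ~: B) (2 : R) <= \sum_(v in ~: B) (deg v)%:R.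
  by apply: ler_sum => v _; rewrite (ler_nat R 2).
rewrite sumr_const -[_ *+ #|~: B|]mulr_natr card_setC; lra.
Qed.

Theorem lemma6 (R : realType) (dmin dmax : nat) (c1 : R) :
  (2 <= dmin)%N -> (dmin <= dmax)%N ->
  0 < c1 -> c1 <= (4 / 100) / dmax%:R ->
  exists N : nat, forall n : nat, (N <= n)%N ->
  forall (deg : 'I_n -> nat) (B : {set 'I_n}),
    (forall v, (dmin <= deg v)%N && (deg v <= dmax)%N) ->
    (#|B|%:R <= c1 * n%:R) ->
    forall k : nat, k%:R <= c1 * n%:R ->
    let L : R := \sum_(d <- degs deg)
               (acount deg d - tcount deg B d)%:R * d%:R
                 * expR (d%:R * k%:R / n%:R) in
    L / (n%:R - dmax%:R)
      * expR (1 - (\sum_(d <- degs deg)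
                      d%:R * (acount deg d - tcount deg B d)%:R) / n%:R)
    <= 9 / 10.
Proof.
move=> dmin_ge dmin_le c1_gt0 c1_le.
have dmax_ge : (2 : R) <= dmax%:R by rewrite (ler_nat R 2) (leq_trans dmin_ge).
have c1_dmax : c1 * dmax%:R <= 4/100 by rewrite -ler_pdivlMr //; lra.
have c1_small : c1 <= 1/50 by nra.
exists (100 * dmax)%N => n n_ge deg B deg_bd B_small k k_le /=.
have n_geR : 100 * dmax%:R <= n%:R :> R by rewrite -(natrM R 100) ler_nat.
have deg_ge v : (2 <= deg v)%N by case/andP: (deg_bd v) => /(leq_trans dmin_ge).
under eq_bigr do rewrite -mulrA.
under [X in expR (1 - X / _)]eq_bigr do rewrite mulrC.
rewrite (sum_degs_setC deg B (fun d => d%:R * expR (d%:R * k%:R / n%:R))).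
rewrite (sum_degs_setC deg B (fun d => d%:R)).
apply: (div_mul_expR_le (a := dmax%:R * k%:R / n%:R)); first lra.
- exact: n_geR.
- rewrite mulr_sumr; apply: ler_sum => v _.
  rewrite mulrC ler_wpM2r // ler_expR -!mulrA ler_wpM2r ?divr_ge0 //.
  by rewrite ler_nat; case/andP: (deg_bd v).
- have : k%:R / n%:R <= c1 by rewrite ler_pdivrMr //; lra.
  have : 0 <= k%:R / n%:R :> R by rewrite divr_ge0.
  rewrite -mulrA; nra.
- apply: sum_deg_setC_ge => //; apply: le_trans B_small _.
  by rewrite [n%:R / 50]mulrC ler_wpM2r //; lra.
Qed.
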